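(* Let $A$ be a sesquiad with canonical map $\rho:A\to R_A$, and let $\rho^*:\operatorname{spec}R_A\to\operatorname{spec}_cA$ send a prime ideal $\mathfrak p$ to the congruence $\{(a,b):\rho(a)-\rho(b)\in\mathfrak p\}$ (the kernel of $A\to R_A/\mathfrak p$). Then the image $\rho^*(\operatorname{Mspec}R_A)$ of the set of maximal ideals meets every non-empty closed subset of $\operatorname{spec}_cA$; in particular so does the image of $\operatorname{spec}R_A$.
   Context: Rings are commutative with $1$; monoids are commutative with $1$ and a zero $0$. A sesquiad is a monoid $A$ with an addition: partially defined sums $\sum_jk_ja_j$ ($k\in\mathbb Z^n$, $n\ge2$) coming from an injective monoid morphism $\varphi:A\to R$ into a ring with $\varphi(0)=0$, a sum being defined exactly when $\sum_jk_j\varphi(a_j)\in\varphi(A)$, then equal to its preimage. The universal ring is $R_A=\mathbb ZA/I(A)$, $I(A)$ generated by the relations expressing the defined sums; $\rho:A\to R_A$ is injective. A congruence on $A$ is an equivalence relation $\mathcal C$ with $A/\mathcal C$ admitting an addition making $A\to A/\mathcal C$ a sesquiad morphism; it is prime if $A/\mathcal C$ is integral ($1\not\sim0$; $af\sim bf\Rightarrow a\sim b$ or $f\sim 0$). $\operatorname{spec}_cA$ is the set of prime congruences with topology generated by $D(a,b)=\{\mathcal C:(a,b)\notin\mathcal C\}$. $\operatorname{Mspec}R$ is the set of maximal ideals. *)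

From HB Require Import structures.
From mathcomp Require Import all_boot all_order all_algebra.
Set Implicit Arguments. Unset Strict Implicit. Unset Printing Implicit Defensive.
Import GRing.Theory.
Local Open Scope ring_scope.

Record cmonoid0 := CMonoid0 {
  mcar :> Type;
  mmul : mcar -> mcar -> mcar;
  mone : mcar;
  mzero : mcar;
  mmulA : forall x y z, mmul x (mmul y z) = mmul (mmul x y) z;
  mmulC : forall x y, mmul x y = mmul y x;
  mmul1 : forall x, mmul mone x = x;
  mmul0 : forall x, mmul mzero x = mzero
}.

Definition lincomb (A : Type) (R : comPzRingType) (f : A -> R)
  (l : seq (int * A)) : R := \sum_(p <- l) f p.2 *~ p.1.

Definition realizes (A : cmonoid0) (ps : seq (int * A) -> option A)
  (R : comPzRingType) (phi : A -> R) : Prop :=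
  injective phi /\ phi (mone A) = 1 /\
  (forall x y, phi (mmul x y) = phi x * phi y) /\ phi (mzero A) = 0 /\
  forall l : seq (int * A), (2 <= size l)%N ->
    forall b, ps l = Some b <-> lincomb phi l = phi b.

(* A sesquiad: monoid with partially defined sums (on lists of length >= 2;
   values on shorter lists are irrelevant junk) coming from some ring. *)
Record sesquiad := Sesquiad {
  smon :> cmonoid0;
  ssum : seq (int * smon) -> option smon;
  sreal : exists (R : comPzRingType) (phi : smon -> R), realizes ssum phi
}.

Definition sesq_ring_map (A : sesquiad) (R : comPzRingType) (f : A -> R) : Prop :=
  f (mone A) = 1 /\ (forall x y, f (mmul x y) = f x * f y) /\ f (mzero A) = 0 /\
  forall l : seq (int * A), (2 <= size l)%N ->
    forall b, @ssum A l = Some b -> lincomb f l = f b.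

(* rho : A -> R is the universal ring R_A = ZA / I(A) of A, characterized up to
   unique isomorphism by its universal property. *)
Definition universal_ring (A : sesquiad) (R : comPzRingType) (rho : A -> R) : Prop :=
  sesq_ring_map rho /\
  forall (S : comPzRingType) (f : A -> S), sesq_ring_map f ->
    (exists g : {rmorphism R -> S}, forall a, g (rho a) = f a) /\
    (forall g1 g2 : {rmorphism R -> S},
        (forall a, g1 (rho a) = g2 (rho a)) -> forall x, g1 x = g2 x).

(* Congruence: an equivalence relation C such that A/C carries an addition
   (given by an injective monoid map A/C -> R) making A -> A/C a sesquiad
   morphism; composing, this is a sum-respecting monoid map psi : A -> R
   whose kernel is exactly C. *)
Definition congruence (A : sesquiad) (C : A -> A -> Prop) : Prop :=
  (forall a, C a a) /\ (forall a b, C a b -> C b a) /\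
  (forall a b c, C a b -> C b c -> C a c) /\
  exists (R : comPzRingType) (psi : A -> R),
    sesq_ring_map psi /\ forall a b, C a b <-> psi a = psi b.

(* Prime congruence: A/C is integral. *)
Definition prime_congruence (A : sesquiad) (C : A -> A -> Prop) : Prop :=
  congruence C /\ ~ C (mone A) (mzero A) /\
  forall a b f : A, C (mmul a f) (mmul b f) -> C a b \/ C f (mzero A).

Definition Dset (A : sesquiad) (a b : A) (C : A -> A -> Prop) : Prop := ~ C a b.

(* Open sets of the topology on spec_c A generated by the D(a,b): unions of
   finite intersections of D(a,b)'s (empty intersection = spec_c A). *)
Definition specc_open (A : sesquiad) (U : (A -> A -> Prop) -> Prop) : Prop :=
  (forall C, U C -> prime_congruence C) /\
  forall C, U C -> exists (n : nat) (a b : 'I_n -> A),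
    (forall i, Dset (a i) (b i) C) /\
    forall C', prime_congruence C' -> (forall i, Dset (a i) (b i) C') -> U C'.

Definition specc_closed (A : sesquiad) (Z : (A -> A -> Prop) -> Prop) : Prop :=
  (forall C, Z C -> prime_congruence C) /\
  specc_open (fun C => prime_congruence C /\ ~ Z C).

Definition ideal (R : comPzRingType) (I : R -> Prop) : Prop :=
  I 0 /\ (forall x y, I x -> I y -> I (x - y)) /\ (forall r x, I x -> I (r * x)).

Definition prime_ideal (R : comPzRingType) (P : R -> Prop) : Prop :=
  ideal P /\ ~ P 1 /\ forall x y, P (x * y) -> P x \/ P y.

Definition maximal_ideal (R : comPzRingType) (M : R -> Prop) : Prop :=
  ideal M /\ ~ M 1 /\
  forall J : R -> Prop, ideal J -> (forall x, M x -> J x) ->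
    J 1 \/ (forall x, J x -> M x).

Definition rho_star (A : sesquiad) (R : comPzRingType) (rho : A -> R)
  (p : R -> Prop) : A -> A -> Prop := fun a b => p (rho a - rho b).

From HB Require Import structures.
From mathcomp Require Import all_boot all_order all_algebra.
From mathcomp Require Import boolp classical_sets.
From mathcomp Require Import ring_quotient generic_quotient.
Set Implicit Arguments. Unset Strict Implicit. Unset Printing Implicit Defensive.
Import GRing.Theory.
Local Open Scope ring_scope.

(* Let Z be closed and non-empty, with a prime congruence C in Z.  By definition
   C is the kernel of a sum-respecting monoid map psi : A -> S into a ring, and
   the universal property of rho factors psi as g \o rho with g : R_A -> S.
   The kernel of g is a proper ideal (since (1,0) is not in C), so by Krull's
   lemma it lies in a maximal ideal M.  Then C is contained in rho^*(M), which is
   a prime congruence because M is prime.  Finally, closed subsets of spec_c A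
   are closed under enlarging congruences (every basic open set D(a,b) around
   the larger one also contains the smaller one), so rho^*(M) lies in Z. *)

Section IdealTheory.
Variable R : comPzRingType.

Lemma ideal_kernel (S : comPzRingType) (g : {rmorphism R -> S}) :
  ideal (fun x => g x = 0).
Proof.
split; first exact: rmorph0.
split; first by move=> x y gx gy; rewrite rmorphB gx gy subr0.
by move=> r x gx; rewrite rmorphM gx mulr0.
Qed.

Lemma idealN (I : R -> Prop) x : ideal I -> I x -> I (- x).
Proof. by move=> [I0 [IB _]] Ix; rewrite -sub0r; apply: IB. Qed.

Lemma idealD (I : R -> Prop) x y : ideal I -> I x -> I y -> I (x + y).
Proof.
move=> HI Ix Iy; have [_ [IB _]] := HI.
by rewrite -[y]opprK; apply: IB => //; apply: idealN.
Qed.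

Definition adjoin (M : R -> Prop) (x : R) : R -> Prop :=
  fun z => exists m r, M m /\ z = m + r * x.

Lemma ideal_adjoin (M : R -> Prop) x : ideal M -> ideal (adjoin M x).
Proof.
move=> HM; have [M0 [MB MM]] := HM.
split; first by exists 0, 0; rewrite mul0r addr0.
split.
  move=> _ _ [m [r [Mm ->]]] [m' [r' [Mm' ->]]].
  exists (m - m'), (r - r'); split; first exact: MB.
  by rewrite mulrBl opprD addrACA.
move=> s _ [m [r [Mm ->]]]; exists (s * m), (s * r); split; first exact: MM.
by rewrite mulrDr mulrA.
Qed.

(* A maximal ideal is prime: if x y lies in M but x does not, then M + R x is
   the unit ideal, so 1 = m + r x and y = m y + r (x y) lies in M. *)
Lemma maximal_prime (M : R -> Prop) : maximal_ideal M -> prime_ideal M.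
Proof.
move=> [HM [nM1 Mmax]]; split=> //; split=> // x y Mxy.
have [M0 [_ MM]] := HM.
have [Mx | nMx] := pselect (M x); [by left | right].
have sub_adjoin z : M z -> adjoin M x z.
  by move=> Mz; exists z, 0; rewrite mul0r addr0.
case: (Mmax _ (ideal_adjoin x HM) sub_adjoin) => [[m [r [Mm one_eq]]] | adjM].
- have -> : y = y * m + r * (x * y).
    by rewrite mulrA -[y * m]mulrC -mulrDl -one_eq mul1r.
  by apply: (idealD HM); apply: MM.
- by exfalso; apply/nMx/adjM; exists 0, 1; rewrite mul1r add0r.
Qed.

Definition proper_over (P0 I : R -> Prop) : Prop :=
  ideal I /\ ~ I 1 /\ forall x, P0 x -> I x.

Lemma chain_union_proper (P0 : R -> Prop) (F : set (R -> Prop)) I0 :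
  F I0 -> (forall I, F I -> proper_over P0 I) ->
  total_on F (fun I J => forall x, I x -> J x) ->
  proper_over P0 (fun x => exists I, F I /\ I x).
Proof.
move=> FI0 FP Ftot; split; last split.
- have ideal_of I : F I -> ideal I by move=> /FP [].
  split; first by exists I0; split=> //; have [] := ideal_of _ FI0.
  split; last first.
    move=> r x [I [FI Ix]]; exists I; split=> //.
    by have [_ [_ IM]] := ideal_of _ FI; apply: IM.
  move=> x y [I [FI Ix]] [J [FJ Jy]].
  case: (Ftot I J FI FJ) => [IJ | JI].
  + by exists J; split=> //; have [_ [JB _]] := ideal_of _ FJ; apply: JB; [apply: IJ |].
  + by exists I; split=> //; have [_ [IB _]] := ideal_of _ FI; apply: IB; [| apply: JI].
- by move=> [I [FI I1]]; have [_ [nI1 _]] := FP _ FI.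
- by move=> x P0x; exists I0; split=> //; have [_ [_ ]] := FP _ FI0; apply.
Qed.

Lemma krull (P0 : R -> Prop) : ideal P0 -> ~ P0 1 ->
  exists M, maximal_ideal M /\ forall x, P0 x -> M x.
Proof.
move=> HP0 nP01.
pose T := {I : R -> Prop | proper_over P0 I}.
have P0_over : proper_over P0 P0 by [].
pose le (I J : T) := `[< forall x, sval I x -> sval J x >].
have [[M [HM [nM1 P0M]]] Mmax] : exists t, premaximal le t.
  apply: (@ZL_preorder T (exist _ P0 P0_over) le).
  - by move=> I; apply/asboolP.
  - by move=> I J K /asboolP IJ /asboolP JK; apply/asboolP => x /IJ /JK.
  move=> F Ftot.
  have [[I0 FI0] | noF] := pselect (exists I, F I); last first.
    by exists (exist _ P0 P0_over) => I FI; exfalso; apply: noF; exists I.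
  pose G : set (R -> Prop) := [set sval I | I in F]%classic.
  have Gtot : total_on G (fun I J => forall x, I x -> J x).
    move=> _ _ [I FI <-] [J FJ <-].
    by case: (Ftot I J FI FJ) => /asboolP; [left | right].
  have G_over J : G J -> proper_over P0 J by move=> [I _ <-]; exact: svalP.
  have Uover := chain_union_proper (imageP sval FI0) G_over Gtot.
  exists (exist _ _ Uover) => I FI; apply/asboolP => x Ix.
  by exists (sval I); split=> //; exists I.
exists M; split=> //; split=> //; split=> // J HJ MJ.
have [J1 | nJ1] := pselect (J 1); [by left | right].
have J_over : proper_over P0 J by split=> //; split=> // x /P0M /MJ.
by have /asboolP := Mmax (exist _ J J_over) (asboolT MJ).
Qed.

End IdealTheory.

(* The ring R, viewed as non-trivial because it has a proper ideal M; this is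
   the carrier on which the quotient R / M is built. *)
Definition nontrivial_by (R : comPzRingType) (M : R -> Prop)
  (HM : ideal M) (nM1 : ~ M 1) : Type := R.

HB.instance Definition _ R M HM nM1 :=
  GRing.ComPzRing.on (@nontrivial_by R M HM nM1).

Lemma nontrivial_by_oner_neq0 R M HM nM1 : (1 : @nontrivial_by R M HM nM1) != 0.
Proof.
apply/eqP=> one0; have {one0} one0R : (1 : R) = 0 := one0.
by apply: nM1; rewrite one0R; case: HM.
Qed.

HB.instance Definition _ R M HM nM1 :=
  GRing.PzSemiRing_isNonZero.Build (@nontrivial_by R M HM nM1)
    (@nontrivial_by_oner_neq0 R M HM nM1).

Definition ideal_pred R M HM nM1 : {pred (@nontrivial_by R M HM nM1)} :=
  fun x => `[< M x >].

Lemma ideal_pred_closed R M HM nM1 : idealr_closed (@ideal_pred R M HM nM1).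
Proof.
have [M0 [_ MM]] := HM; split; first exact/asboolP.
  by apply/negP => /asboolP.
move=> a u v /asboolP Mu /asboolP Mv; apply/asboolP.
by apply: idealD => //; apply: MM.
Qed.

HB.instance Definition _ R M HM nM1 :=
  isIdealr.Build (@nontrivial_by R M HM nM1) (@ideal_pred R M HM nM1)
    (@ideal_pred_closed R M HM nM1).

Lemma ideal_is_kernel (R : comPzRingType) (M : R -> Prop) : ideal M -> ~ M 1 ->
  exists (S : comPzRingType) (pi : {rmorphism R -> S}), forall x, pi x = 0 <-> M x.
Proof.
move=> HM nM1; pose Q := {ideal_quot (@ideal_pred R M HM nM1)}.
pose pi : {rmorphism nontrivial_by HM nM1 -> Q} := \pi_Q%qT.
exists Q, pi => x.
have := @Quotient.idealrBE _ (@ideal_pred R M HM nM1) x 0.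
rewrite subr0 (rmorph0 pi) => piE; split.
- by move=> /eqP; rewrite -piE => /asboolP.
- by move=> Mx; apply/eqP; rewrite -piE; apply/asboolP.
Qed.

Lemma lincomb_rmorph (A : Type) (R S : comPzRingType) (g : {rmorphism R -> S})
  (f : A -> R) l : lincomb (fun a => g (f a)) l = g (lincomb f l).
Proof. by rewrite /lincomb raddf_sum; apply: eq_bigr => p _; rewrite raddfMz. Qed.

Lemma sesq_ring_map_comp (A : sesquiad) (R S : comPzRingType) (f : A -> R)
  (g : {rmorphism R -> S}) : sesq_ring_map f -> sesq_ring_map (fun a => g (f a)).
Proof.
move=> [f1 [fM [f0 fsum]]]; split; first by rewrite f1 rmorph1.
split; first by move=> x y; rewrite fM rmorphM.
split; first by rewrite f0 rmorph0.
by move=> l size_l b lb; rewrite lincomb_rmorph (fsum l size_l b lb).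
Qed.

Lemma congruence_of_kernel (A : sesquiad) (C : A -> A -> Prop)
  (S : comPzRingType) (psi : A -> S) :
  sesq_ring_map psi -> (forall a b, C a b <-> psi a = psi b) -> congruence C.
Proof.
move=> Hpsi CE; split; first by move=> a; apply/CE.
split; first by move=> a b /CE ab; apply/CE.
split; first by move=> a b c /CE ab /CE bc; apply/CE; rewrite ab.
by exists S, psi.
Qed.

Lemma rho_star_prime (A : sesquiad) (R : comPzRingType) (rho : A -> R)
  (P : R -> Prop) : sesq_ring_map rho -> prime_ideal P ->
  prime_congruence (rho_star rho P).
Proof.
move=> Hrho [HP [nP1 Pmul]]; have [r1 [rM [r0 _]]] := Hrho.
split; last split.
- have [S [pi piE]] := ideal_is_kernel HP nP1.
  apply: (congruence_of_kernel (sesq_ring_map_comp pi Hrho)) => a b.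
  rewrite /rho_star -piE rmorphB; split => [/eqP | ->]; last exact: subrr.
  by rewrite subr_eq0 => /eqP.
- by rewrite /rho_star r1 r0 subr0.
- move=> a b f; rewrite /rho_star !rM -mulrBl r0 subr0.
  by move=> /Pmul [] ?; [left | right].
Qed.

(* Closed subsets of spec_c A are closed under enlarging the congruence: every
   basic open neighbourhood D(a,b) of the larger congruence contains the
   smaller one. *)
Lemma specc_closed_up (A : sesquiad) (Z : (A -> A -> Prop) -> Prop)
  (C C' : A -> A -> Prop) : specc_closed Z -> Z C -> prime_congruence C' ->
  (forall a b, C a b -> C' a b) -> Z C'.
Proof.
move=> [ZP [_ Uopen]] ZC C'P CC'.
apply: contrapT => nZC'.
have [n [a [b [C'D Uall]]]] := Uopen C' (conj C'P nZC').
have CD i : Dset (a i) (b i) C by move=> /CC' /(C'D i).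
by have [_ []] := Uall C (ZP C ZC) CD.
Qed.

(* Every prime congruence lies below rho^*(P0) for a proper ideal P0 of R_A:
   the kernel of the ring morphism factoring a map that realizes it. *)
Lemma prime_congruence_below (A : sesquiad) (R : comPzRingType) (rho : A -> R)
  (C : A -> A -> Prop) : universal_ring rho -> prime_congruence C ->
  exists P0 : R -> Prop,
    [/\ ideal P0, ~ P0 1 & forall a b, C a b -> P0 (rho a - rho b)].
Proof.
move=> [_ univ] [[_ [_ [_ [S [psi [Hpsi CE]]]]]] [nC10 _]].
have [[g gE] _] := univ S psi Hpsi.
exists (fun x => g x = 0); split; first exact: ideal_kernel.
- rewrite rmorph1 => one0; apply/nC10/CE.
  by have [-> [_ [-> _]]] := Hpsi.
- by move=> a b /CE ab; rewrite rmorphB !gE ab subrr.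
Qed.

Theorem lemma2p1 (A : sesquiad) (R : comPzRingType) (rho : A -> R) :
  universal_ring rho ->
  forall Z : (A -> A -> Prop) -> Prop,
    specc_closed Z -> (exists C, Z C) ->
    (exists M : R -> Prop, maximal_ideal M /\ Z (rho_star rho M)) /\
    (exists P : R -> Prop, prime_ideal P /\ Z (rho_star rho P)).
Proof.
move=> Hrho Z Zclosed [C ZC].
have CP : prime_congruence C by case: Zclosed => ZP _; apply: ZP.
have [P0 [HP0 nP01 CP0]] := prime_congruence_below Hrho CP.
have [M [HM P0M]] := krull HP0 nP01.
have ZM : Z (rho_star rho M).
  apply: (specc_closed_up Zclosed ZC).
  - by apply: rho_star_prime; [case: Hrho | apply: maximal_prime].
  - by move=> a b /CP0 /P0M.
by split; exists M; split=> //; apply: maximal_prime.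
Qed.
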